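(* Let $q>1$, $\alpha>0$, $0<\theta<1$, $1\le r<\infty$, and let $K_d$ be a nonnegative decreasing function on $(0,1)$. Then, with constants depending only on $q,\alpha,\theta,r$, $$\int_0^1\Bigl[t^{1-\theta}(1-\log t)^{\frac{\alpha(1-\theta)}{q}}\sup_{t<s<1}(1-\log s)^{-\frac{\alpha}{q}}K_d(s)\Bigr]^r\frac{dt}{t}\ \approx\ \int_0^1\Bigl[t^{1-\theta}(1-\log t)^{-\frac{\alpha\theta}{q}}K_d(t)\Bigr]^r\frac{dt}{t}.$$
   Context: $\log$ is the natural logarithm. $A\approx B$ means $c^{-1}B\le A\le cB$ with $c$ independent of $K_d$. *)

From Stdlib Require Import Reals ClassicalEpsilon.
Open Scope R_scope.

(* Real power x^y for x >= 0, extended by 0^y = 0 (y > 0 in all uses). *)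
Definition rpow (x y : R) : R :=
  if Rlt_dec 0 x then Rpower x y else 0.

Definition Rsup (E : R -> Prop) : R :=
  epsilon (inhabits 0) (fun m => is_lub E m).

Definition Ksup (q alpha : R) (K : R -> R) (t : R) : R :=
  Rsup (fun y => exists s, t < s < 1 /\
          y = rpow (1 - ln s) (- (alpha / q)) * K s).

Definition lhs_integrand (q alpha theta r : R) (K : R -> R) (t : R) : R :=
  rpow (rpow t (1 - theta) * rpow (1 - ln t) (alpha * (1 - theta) / q)
        * Ksup q alpha K t) r / t.

Definition rhs_integrand (q alpha theta r : R) (K : R -> R) (t : R) : R :=
  rpow (rpow t (1 - theta) * rpow (1 - ln t) (- (alpha * theta / q)) * K t) r / t.

(* "\int_0^1 f <= M" for a nonnegative f, as an improper integral in [0,+oo]: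
   every Riemann integral over a compact [a,b] in (0,1) is at most M. *)
Definition int01_le (f : R -> R) (M : R) : Prop :=
  forall (a b : R) (pr : Riemann_integrable f a b),
    0 < a -> a <= b -> b < 1 -> RiemannInt pr <= M.

(* The lower bound is pointwise: the supremum defining the left integrand at t/2
   already contains the value at s = t, so the right integrand at t is at most a
   constant times the left integrand at t/2, and the substitution t -> t/2 only
   costs a constant.
   For the upper bound, cut (0,1) along the geometric grid x_k = e^(-Nk), on which
   1 - log x_k = 1 + Nk.  On the cell [x_(k+1), x_k] the supremum is at most the
   largest of the values a_j^(1/r) = (1 + Nj)^(-alpha/q) K(x_(j+1)), j <= k, so the
   left integrand is at most e^N D_k (a_0 + ... + a_k), with D_k the power weights
   frozen at the cell.  For N large the D_k halve from cell to cell, so a discrete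
   Hardy inequality bounds the sum over k by 2 sum_k D_k a_k; since K decreases,
   each D_k a_k is at most a constant times the integral of the right integrand over
   the next cell [x_(k+2), x_(k+1)]. *)

From Stdlib Require Import Reals ZArith Lra Lia Psatz ClassicalEpsilon.
From Coquelicot Require Import Coquelicot.
Open Scope R_scope.

Lemma exp_le_compat x y : x <= y -> exp x <= exp y.
Proof. intros [Hlt | ->]; [left; apply exp_increasing |]; lra. Qed.

Lemma Rpower_pos x y : 0 < Rpower x y.
Proof. apply exp_pos. Qed.

Lemma Rpower_le_base_nonpos x y z :
  0 < x -> x <= y -> z <= 0 -> Rpower y z <= Rpower x z.
Proof.
  intros Hx Hxy Hz; unfold Rpower; apply exp_le_compat.
  assert (ln x <= ln y) by (apply ln_le; lra); nra.
Qed.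

Lemma Rpower_exp y z : Rpower (exp y) z = exp (z * y).
Proof. unfold Rpower; rewrite ln_exp; reflexivity. Qed.

Lemma rpow_pos_eq x y : 0 < x -> rpow x y = Rpower x y.
Proof. intros Hx; unfold rpow; destruct (Rlt_dec 0 x); [reflexivity | lra]. Qed.

Lemma rpow_ge0 x y : 0 <= rpow x y.
Proof. unfold rpow; destruct (Rlt_dec 0 x); [left; apply Rpower_pos | lra]. Qed.

Lemma rpow_0_l y : rpow 0 y = 0.
Proof. unfold rpow; destruct (Rlt_dec 0 0); [lra | reflexivity]. Qed.

Lemma rpow_mult x y z : 0 < x -> 0 <= y -> rpow (x * y) z = Rpower x z * rpow y z.
Proof.
  intros Hx [Hy | <-].
  - rewrite !rpow_pos_eq by nra; symmetry; apply Rpower_mult_distr; lra.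
  - rewrite Rmult_0_r, rpow_0_l; ring.
Qed.

Lemma rpow_le_base x y z : 0 <= x -> x <= y -> 0 <= z -> rpow x z <= rpow y z.
Proof.
  intros [Hx | <-] Hxy Hz.
  - rewrite !rpow_pos_eq by lra; apply Rle_Rpower_l; lra.
  - rewrite rpow_0_l; apply rpow_ge0.
Qed.

Lemma rpow_weighted_eq t p a e Y r :
  0 < t -> 0 < p -> 0 <= Y ->
  rpow (rpow t a * rpow p e * Y) r / t
  = Rpower t (a * r) * Rpower p (e * r) * (rpow Y r / t).
Proof.
  intros Ht Hp HY.
  rewrite (rpow_pos_eq t), (rpow_pos_eq p), rpow_mult by
    (auto; apply Rmult_lt_0_compat; apply Rpower_pos).
  rewrite <- Rpower_mult_distr, !Rpower_mult by apply Rpower_pos.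
  unfold Rdiv; ring.
Qed.

Lemma one_lt_1_minus_ln t : 0 < t < 1 -> 1 < 1 - ln t.
Proof. intros Ht; assert (ln t < ln 1) by (apply ln_increasing; lra); rewrite ln_1 in *; lra. Qed.

Lemma one_minus_ln_le s t : 0 < s -> s <= t -> 1 - ln t <= 1 - ln s.
Proof. intros; assert (ln s <= ln t) by (apply ln_le; lra); lra. Qed.
(** * Riemann integrability of monotone products *)

Definition increasing_nonneg_on (a b : R) (f : R -> R) : Prop :=
  forall s t, a <= s -> s <= t -> t <= b -> 0 <= f s /\ f s <= f t.

Definition decreasing_nonneg_on (a b : R) (f : R -> R) : Prop :=
  forall s t, a <= s -> s <= t -> t <= b -> 0 <= f t /\ f t <= f s.

(* Informative, since Riemann_integrable lives in Type. *)
Definition monotone_nonneg_on (a b : R) (f : R -> R) : Set :=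
  {increasing_nonneg_on a b f} + {decreasing_nonneg_on a b f}.

Lemma increasing_nonneg_on_mult a b f g :
  increasing_nonneg_on a b f -> increasing_nonneg_on a b g ->
  increasing_nonneg_on a b (fun t => f t * g t).
Proof.
  intros Hf Hg s t Hs Hst Ht.
  destruct (Hf s t), (Hg s t); auto; split; [nra | apply Rmult_le_compat; lra].
Qed.

Lemma decreasing_nonneg_on_mult a b f g :
  decreasing_nonneg_on a b f -> decreasing_nonneg_on a b g ->
  decreasing_nonneg_on a b (fun t => f t * g t).
Proof.
  intros Hf Hg s t Hs Hst Ht.
  destruct (Hf s t), (Hg s t); auto; split; [nra | apply Rmult_le_compat; lra].
Qed.

Lemma increasing_nonneg_on_1 a b : increasing_nonneg_on a b (fun _ => 1).
Proof. intros s t _ _ _; lra. Qed.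

Lemma decreasing_nonneg_on_inv a b : 0 < a -> decreasing_nonneg_on a b Rinv.
Proof.
  intros Ha s t Hs Hst Ht; split.
  - left; apply Rinv_0_lt_compat; lra.
  - apply Rinv_le_contravar; lra.
Qed.

Lemma decreasing_nonneg_on_rpow a b f r :
  0 <= r -> decreasing_nonneg_on a b f ->
  decreasing_nonneg_on a b (fun t => rpow (f t) r).
Proof.
  intros Hr Hf s t Hs Hst Ht; destruct (Hf s t); auto.
  split; [apply rpow_ge0 | apply rpow_le_base; auto].
Qed.

Lemma Rpower_monotone_on a b E : 0 < a -> monotone_nonneg_on a b (fun t => Rpower t E).
Proof.
  intros Ha; destruct (Rle_dec 0 E); [left | right]; intros s t Hs Hst Ht;
    (split; [left; apply Rpower_pos |]).
  - apply Rle_Rpower_l; lra.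
  - apply Rpower_le_base_nonpos; lra.
Qed.

Lemma Rpower_1_minus_ln_monotone_on a b F :
  0 < a -> b < 1 -> monotone_nonneg_on a b (fun t => Rpower (1 - ln t) F).
Proof.
  intros Ha Hb; destruct (Rle_dec 0 F); [right | left]; intros s t Hs Hst Ht;
    (split; [left; apply Rpower_pos |]);
    assert (1 < 1 - ln t) by (apply one_lt_1_minus_ln; lra);
    assert (1 - ln t <= 1 - ln s) by (apply one_minus_ln_le; lra).
  - apply Rle_Rpower_l; lra.
  - apply Rpower_le_base_nonpos; lra.
Qed.

Lemma Riemann_integrable_of_step_bounds (f : R -> R) (a b : R) : a <= b ->
  (forall eps, 0 < eps -> exists g1 g2 : StepFun a b,
      (forall t, a <= t <= b -> g1 t <= f t <= g2 t) /\
      RiemannInt_SF g2 - RiemannInt_SF g1 < eps) ->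
  Riemann_integrable f a b.
Proof.
  intros Hab H [e He].
  destruct (constructive_indefinite_description _ (H e He)) as [g1 Hg1].
  destruct (constructive_indefinite_description _ Hg1) as [g2 [Hg Hs]].
  exists g1, (mkStepFun (StepFun_P28 (-1) g2 g1)); split.
  - intros t Ht; rewrite Rmin_left, Rmax_right in Ht by lra; simpl.
    destruct (Hg t Ht); rewrite Rabs_right by lra; lra.
  - rewrite StepFun_P30; simpl.
    assert (RiemannInt_SF g1 <= RiemannInt_SF g2).
    { apply StepFun_P37; auto; intros t Ht; destruct (Hg t); lra. }
    rewrite Rabs_right; lra.
Qed.

Lemma IsStepFun_const_open (f : R -> R) (x y c : R) :
  x <= y -> (forall t, x < t < y -> f t = c) -> IsStepFun f x y.
Proof.
  intros Hxy Hc; exists (cons x (cons y nil)), (cons c nil).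
  unfold adapted_couple; repeat split.
  - intros i Hi; simpl in Hi; inversion Hi; [simpl; assumption | lia].
  - simpl; unfold Rmin; destruct (Rle_dec x y); [reflexivity | lra].
  - simpl; unfold Rmax; destruct (Rle_dec x y); [reflexivity | lra].
  - intros i Hi t Ht; simpl in Hi; destruct i; [apply Hc; exact Ht | lia].
Qed.

Lemma RiemannInt_SF_const_open (x y c : R) (g : StepFun x y) :
  x <= y -> (forall t, x < t < y -> g t = c) -> RiemannInt_SF g = c * (y - x).
Proof.
  intros Hxy Hc; rewrite <- (StepFun_P18 x y c).
  apply Rle_antisym; apply StepFun_P37; auto; intros t Ht; simpl; unfold fct_cte;
    rewrite Hc; auto; lra.
Qed.

Definition grid_index (a h t : R) : nat := Z.to_nat (Int_part ((t - a) / h)).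

Lemma grid_index_spec a h t : 0 < h -> a <= t ->
  a + INR (grid_index a h t) * h <= t < a + INR (S (grid_index a h t)) * h.
Proof.
  intros Hh Hat; unfold grid_index.
  destruct (base_Int_part ((t - a) / h)) as [Hlo Hhi].
  assert (Hx : 0 <= (t - a) / h) by (apply Rdiv_le_0_compat; lra).
  assert (Hz : (-1 < Int_part ((t - a) / h))%Z) by (apply lt_IZR; lra).
  assert (Hz' : (0 <= Int_part ((t - a) / h))%Z) by lia.
  rewrite S_INR, INR_IZR_INZ, Z2Nat.id by exact Hz'.
  assert (Ht : t = a + (t - a) / h * h) by (field; lra).
  split; [rewrite Ht at 2 | rewrite Ht at 1]; nra.
Qed.

Lemma grid_index_open a h k t : 0 < h ->
  a + INR k * h < t < a + INR (S k) * h -> grid_index a h t = k.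
Proof.
  intros Hh Ht; rewrite S_INR in Ht; unfold grid_index.
  rewrite <- (Int_part_spec ((t - a) / h) (Z.of_nat k)), Nat2Z.id; [reflexivity |].
  rewrite <- INR_IZR_INZ; split.
  - apply (Rmult_lt_reg_r h); auto; unfold Rdiv; rewrite Rmult_minus_distr_r, Rmult_assoc,
      Rinv_l, Rmult_1_r; lra.
  - apply (Rmult_le_reg_r h); auto; unfold Rdiv; rewrite Rmult_assoc, Rinv_l, Rmult_1_r; lra.
Qed.

Lemma grid_StepFun a h b (v : nat -> R) n : 0 < h -> b = a + INR (S n) * h ->
  { pr : IsStepFun (fun t => v (grid_index a h t)) a b |
    RiemannInt_SF (mkStepFun pr) = sum_f_R0 (fun k => v k * h) n }.
Proof.
  intros Hh ->; induction n as [| n IH].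
  - assert (Hab : a <= a + INR 1 * h) by (simpl; lra).
    assert (Hc : forall t, a < t < a + INR 1 * h -> v (grid_index a h t) = v 0%nat).
    { intros t Ht; rewrite (grid_index_open a h 0); auto; simpl in *; lra. }
    exists (IsStepFun_const_open _ _ _ _ Hab Hc); simpl.
    rewrite (RiemannInt_SF_const_open _ _ (v 0%nat)); auto; ring.
  - destruct IH as [pr1 E1].
    assert (Hp : a + INR (S n) * h <= a + INR (S (S n)) * h) by (rewrite (S_INR (S n)); lra).
    assert (Hc : forall t, a + INR (S n) * h < t < a + INR (S (S n)) * h ->
                   v (grid_index a h t) = v (S n)).
    { intros t Ht; rewrite (grid_index_open a h (S n)); auto. }
    set (pr2 := IsStepFun_const_open _ _ _ _ Hp Hc).
    exists (StepFun_P46 pr1 pr2).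
    rewrite <- (StepFun_P43 pr1 pr2), E1; simpl sum_f_R0.
    rewrite (RiemannInt_SF_const_open _ _ (v (S n))); auto.
    rewrite (S_INR (S n)); ring.
Qed.

Lemma sum_cross_diff_le (u w : nat -> R) n :
  Un_growing u -> Un_decreasing w -> (forall k, 0 <= u k) -> (forall k, 0 <= w k) ->
  sum_f_R0 (fun k => u (S k) * w k - u k * w (S k)) n
  <= (u (S n) - u 0%nat) * w 0%nat + u (S n) * (w 0%nat - w (S n)).
Proof.
  intros Hu Hw Hu0 Hw0; induction n as [| n IH]; simpl sum_f_R0.
  - specialize (Hu 0%nat); specialize (Hw 0%nat); specialize (Hu0 0%nat); specialize (Hw0 (S 0)).
    nra.
  - assert (w (S n) <= w 0%nat) by (apply decreasing_prop; auto; lia).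
    assert (u 0%nat <= u (S n)) by (apply Rge_le, growing_prop; auto; lia).
    specialize (Hu (S n)); specialize (Hw (S n)); specialize (Hu0 (S n)); specialize (Hw0 (S (S n))).
    assert (0 <= (u (S (S n)) - u (S n)) * (2 * w 0%nat - w (S n) - w (S (S n)))) by nra.
    nra.
Qed.

Lemma small_mesh L C eps : 0 < eps -> 0 <= L -> exists n, L / INR (S n) * C < eps.
Proof.
  intros Heps HL; destruct (INR_unbounded (L * C / eps)) as [n Hn]; exists n.
  assert (HSn : 0 < INR (S n)) by (apply lt_0_INR; lia).
  apply (Rmult_lt_reg_r (INR (S n))); auto.
  replace (L / INR (S n) * C * INR (S n)) with (L * C) by (field; lra).
  apply (Rmult_lt_reg_r (/ eps)); [apply Rinv_0_lt_compat; lra |].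
  rewrite S_INR in *; replace (eps * (INR n + 1) * / eps) with (INR n + 1) by (field; lra).
  unfold Rdiv in Hn; lra.
Qed.

Lemma Riemann_integrable_incr_decr (i d : R -> R) (a b : R) : a <= b ->
  increasing_nonneg_on a b i -> decreasing_nonneg_on a b d ->
  Riemann_integrable (fun t => i t * d t) a b.
Proof.
  intros Hab Hi Hd; destruct (Req_EM_T a b) as [<- | Hne]; [apply RiemannInt_P7 |].
  apply Riemann_integrable_of_step_bounds; auto; intros eps Heps.
  set (C := (i b - i a) * d a + i b * (d a - d b)).
  destruct (small_mesh (b - a) C eps) as [n Hn]; [lra | lra |].
  set (h := (b - a) / INR (S n)).
  assert (HSn : 0 < INR (S n)) by (apply lt_0_INR; lia).
  assert (Hh : 0 < h) by (apply Rdiv_lt_0_compat; lra).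
  assert (Hb : b = a + INR (S n) * h) by (unfold h; field; lra).
  (* grid points, clamped at b so that the last cell also ends at b *)
  set (x := fun k => Rmin (a + INR k * h) b).
  assert (Hx : forall k, a <= x k <= b).
  { intros k; unfold x; assert (0 <= INR k) by apply pos_INR.
    split; [apply Rmin_glb; nra | apply Rmin_r]. }
  assert (Hx_grow : Un_growing x).
  { intros k; unfold x; rewrite S_INR; apply Rle_min_compat_r; lra. }
  destruct (grid_StepFun a h b (fun k => i (x k) * d (x (S k))) n Hh Hb) as [pr1 E1].
  destruct (grid_StepFun a h b (fun k => i (x (S k)) * d (x k)) n Hh Hb) as [pr2 E2].
  exists (mkStepFun pr1), (mkStepFun pr2); split.
  - intros t Ht; simpl; set (k := grid_index a h t).
    destruct (grid_index_spec a h t Hh (proj1 Ht)) as [Hlo Hhi]; fold k in Hlo, Hhi.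
    assert (Hxk : x k = a + INR k * h) by (apply Rmin_left; lra).
    assert (Hxt : x k <= t <= x (S k)) by (split; [lra | apply Rmin_glb; lra]).
    destruct (Hx k), (Hx (S k)).
    destruct (Hi (x k) t), (Hi t (x (S k))), (Hd (x k) t), (Hd t (x (S k))); try lra.
    split; apply Rmult_le_compat; lra.
  - simpl; rewrite E1, E2, <- minus_sum.
    set (u := fun k => i (x k)); set (w := fun k => d (x k)).
    assert (Hgap : sum_f_R0 (fun k => u (S k) * w k - u k * w (S k)) n <= C).
    { replace C with ((u (S n) - u 0%nat) * w 0%nat + u (S n) * (w 0%nat - w (S n))).
      - apply sum_cross_diff_le; intros k; unfold u, w; destruct (Hx k), (Hx (S k)).
        + apply (Hi (x k) (x (S k))); auto; apply Hx_grow.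
        + apply (Hd (x k) (x (S k))); auto; apply Hx_grow.
        + apply (Hi (x k) (x k)); lra.
        + apply (Hd (x k) (x k)); lra.
      - assert (x 0%nat = a) by (unfold x; simpl INR; rewrite Rmin_left; lra).
        assert (x (S n) = b) by (unfold x; rewrite <- Hb; apply Rmin_right; lra).
        unfold u, w, C; congruence. }
    rewrite (sum_eq _ (fun k => (u (S k) * w k - u k * w (S k)) * h)) by (intros; unfold u, w; ring).
    rewrite <- scal_sum.
    apply Rle_lt_trans with (h * C); [apply Rmult_le_compat_l; lra | exact Hn].
Qed.

Lemma Riemann_integrable_monotone_prod (f g Z : R -> R) (a b : R) : a <= b ->
  monotone_nonneg_on a b f -> monotone_nonneg_on a b g -> decreasing_nonneg_on a b Z ->
  Riemann_integrable (fun t => f t * g t * Z t) a b.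
Proof.
  intros Hab [Hf | Hf] [Hg | Hg] HZ.
  - apply Riemann_integrable_incr_decr; auto; apply increasing_nonneg_on_mult; auto.
  - apply Riemann_integrable_ext with (fun t => f t * (g t * Z t)); [intros; ring |].
    apply Riemann_integrable_incr_decr; auto; apply decreasing_nonneg_on_mult; auto.
  - apply Riemann_integrable_ext with (fun t => g t * (f t * Z t)); [intros; ring |].
    apply Riemann_integrable_incr_decr; auto; apply decreasing_nonneg_on_mult; auto.
  - apply Riemann_integrable_ext with (fun t => 1 * (f t * g t * Z t)); [intros; ring |].
    apply Riemann_integrable_incr_decr; auto using increasing_nonneg_on_1.
    repeat apply decreasing_nonneg_on_mult; auto.
Qed.

(** * Comparing integrals *)

Lemma RiemannInt_ge_const (f : R -> R) (a b l : R) (pr : Riemann_integrable f a b) :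
  a <= b -> (forall t, a < t < b -> l <= f t) -> l * (b - a) <= RiemannInt pr.
Proof. intros; rewrite <- (RiemannInt_P15 (RiemannInt_P14 a b l)); apply RiemannInt_P19; auto. Qed.

Lemma RiemannInt_le_dilation (f g : R -> R) (a b u c : R)
  (prf : Riemann_integrable f (u * a) (u * b)) (prg : Riemann_integrable g a b) :
  a <= b -> (forall t, a < t < b -> g t <= c * (u * f (u * t))) ->
  RiemannInt prg <= c * RiemannInt prf.
Proof.
  intros Hab Hgf.
  assert (Hf : ex_RInt f (u * a + 0) (u * b + 0))
    by (rewrite !Rplus_0_r; exact (ex_RInt_Reals_1 _ _ _ prf)).
  assert (Hfu := ex_RInt_comp_lin f u 0 a b Hf).
  rewrite <- (RInt_Reals _ _ _ prf), <- (RInt_Reals _ _ _ prg).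
  replace (u * a) with (u * a + 0) by ring; replace (u * b) with (u * b + 0) by ring.
  rewrite <- (RInt_comp_lin f u 0 a b Hf).
  change (c * _) with (scal c (RInt (fun y => scal u (f (u * y + 0))) a b)).
  rewrite <- RInt_scal by exact Hfu.
  apply RInt_le; [exact Hab | exact (ex_RInt_Reals_1 _ _ _ prg) | exact (ex_RInt_scal _ _ _ c Hfu) |].
  intros t Ht; rewrite Rplus_0_r; exact (Hgf t Ht).
Qed.

Lemma locate_in_cells (x : nat -> R) k s :
  x (S k) <= s <= x 0%nat -> exists j, (j <= k)%nat /\ x (S j) <= s <= x j.
Proof.
  revert s; induction k as [| k IH]; intros s Hs; [exists 0%nat; split; [lia | lra] |].
  destruct (Rle_dec (x (S k)) s).
  - destruct (IH s) as [j [Hj Hjs]]; [lra |]; exists j; split; [lia | auto].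
  - exists (S k); split; [lia | lra].
Qed.

Lemma RiemannInt_le_sum_cells (f : R -> R) (x B : nat -> R) :
  Un_decreasing x -> (forall k, 0 <= B k) ->
  (forall k a b (pr : Riemann_integrable f a b),
     x (S k) <= a -> a <= b -> b <= x k -> RiemannInt pr <= B k) ->
  forall n a b (pr : Riemann_integrable f a b),
    x (S n) <= a -> a <= b -> b <= x 0%nat -> RiemannInt pr <= sum_f_R0 B n.
Proof.
  intros Hx HB Hcell n; induction n as [| n IH]; intros a b pr Ha Hab Hb; [apply Hcell; auto |].
  simpl sum_f_R0; assert (HBn := HB (S n)).
  destruct (Rle_dec (x (S n)) a) as [Ha' | Ha'].
  { specialize (IH a b pr Ha' Hab Hb); lra. }
  destruct (Rle_dec b (x (S n))) as [Hb' | Hb'].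
  { specialize (Hcell (S n) a b pr Ha Hab Hb'); assert (0 <= sum_f_R0 B n) by (apply cond_pos_sum; auto); lra. }
  assert (Hc : a <= x (S n) <= b) by lra.
  rewrite <- (RiemannInt_P26 (RiemannInt_P22 pr Hc) (RiemannInt_P23 pr Hc) pr), Rplus_comm.
  apply Rplus_le_compat; [apply IH | apply Hcell]; lra.
Qed.

Lemma sum_cells_le_RiemannInt (f : R -> R) (x B : nat -> R) (c : R) :
  Un_decreasing x ->
  (forall k (pr : Riemann_integrable f (x (S k)) (x k)), B k <= c * RiemannInt pr) ->
  forall n (pr : Riemann_integrable f (x (S n)) (x 0%nat)), sum_f_R0 B n <= c * RiemannInt pr.
Proof.
  intros Hx Hcell n; induction n as [| n IH]; intros pr; [apply Hcell |].
  assert (Hc : x (S (S n)) <= x (S n) <= x 0%nat)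
    by (split; [apply Hx | apply decreasing_prop; auto; lia]).
  rewrite <- (RiemannInt_P26 (RiemannInt_P22 pr Hc) (RiemannInt_P23 pr Hc) pr), Rplus_comm.
  simpl sum_f_R0; rewrite Rmult_plus_distr_l; apply Rplus_le_compat; auto.
Qed.

(** * Discrete estimates on a geometric grid *)

(* Discrete Hardy inequality; the induction runs on the form with the extra term [D n * sum_f_R0 a n]. *)
Lemma sum_partial_sums_le (D a : nat -> R) n :
  (forall k, 0 <= D k) -> (forall k, 0 <= a k) -> (forall k, 2 * D (S k) <= D k) ->
  sum_f_R0 (fun k => D k * sum_f_R0 a k) n <= 2 * sum_f_R0 (fun k => D k * a k) n.
Proof.
  intros HD Ha Hratio.
  assert (Hstrong : sum_f_R0 (fun k => D k * sum_f_R0 a k) n + D n * sum_f_R0 a n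
                    <= 2 * sum_f_R0 (fun k => D k * a k) n).
  { induction n as [| n IH]; simpl sum_f_R0; [lra |].
    assert (0 <= sum_f_R0 a n) by (apply cond_pos_sum; auto).
    specialize (Hratio n); specialize (HD (S n)); specialize (Ha (S n)); nra. }
  assert (0 <= D n * sum_f_R0 a n) by (apply Rmult_le_pos; auto; apply cond_pos_sum; auto).
  lra.
Qed.

Fixpoint max_upto (u : nat -> R) (n : nat) : R :=
  match n with
  | O => u 0%nat
  | S n' => Rmax (max_upto u n') (u n)
  end.

Lemma max_upto_ge (u : nat -> R) j n : (j <= n)%nat -> u j <= max_upto u n.
Proof.
  induction n as [| n IH]; intros Hj; simpl.
  - replace j with 0%nat by lia; lra.
  - destruct (Nat.eq_dec j (S n)) as [-> | Hne]; [apply Rmax_r |].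
    eapply Rle_trans; [apply IH; lia | apply Rmax_l].
Qed.

Lemma rpow_max_upto_le_sum (u : nat -> R) r n :
  0 <= r -> (forall k, 0 <= u k) ->
  rpow (max_upto u n) r <= sum_f_R0 (fun k => rpow (u k) r) n.
Proof.
  intros Hr Hu; induction n as [| n IH]; simpl; [lra |].
  assert (H0 := rpow_ge0 (u (S n)) r).
  assert (0 <= sum_f_R0 (fun k => rpow (u k) r) n) by (apply cond_pos_sum; intros; apply rpow_ge0).
  unfold Rmax; destruct (Rle_dec (max_upto u n) (u (S n))); lra.
Qed.

Definition geom (N : R) (k : nat) : R := exp (- (N * INR k)).

Lemma geom_pos N k : 0 < geom N k.
Proof. apply exp_pos. Qed.

Lemma geom_0 N : geom N 0 = 1.
Proof. unfold geom; simpl; rewrite Rmult_0_r, Ropp_0; apply exp_0. Qed.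

Lemma geom_S N k : geom N (S k) = geom N k * exp (- N).
Proof. unfold geom; rewrite <- exp_plus, S_INR; f_equal; ring. Qed.

Lemma geom_decreasing N : 0 <= N -> Un_decreasing (geom N).
Proof. intros HN k; unfold geom; apply exp_le_compat; rewrite S_INR; nra. Qed.

Lemma geom_le_1 N k : 0 <= N -> geom N k <= 1.
Proof. intros HN; rewrite <- (geom_0 N); apply decreasing_prop; [apply geom_decreasing; auto | lia]. Qed.

Lemma exp_opp_lt_1 N : 0 < N -> exp (- N) < 1.
Proof. intros HN; rewrite <- exp_0; apply exp_increasing; lra. Qed.

Lemma geom_S_lt_1 N k : 0 < N -> geom N (S k) < 1.
Proof.
  intros HN; rewrite geom_S; pose proof (geom_le_1 N k (Rlt_le _ _ HN)); pose proof (geom_pos N k).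
  pose proof (exp_opp_lt_1 N HN); nra.
Qed.

Lemma one_minus_ln_geom N k : 1 - ln (geom N k) = 1 + N * INR k.
Proof. unfold geom; rewrite ln_exp; ring. Qed.

Lemma geom_exhausts N a : 0 < N -> 0 < a -> exists n, geom N (S n) <= a.
Proof.
  intros HN Ha; destruct (INR_unbounded (- ln a / N)) as [n Hn]; exists n.
  unfold geom; rewrite <- (exp_ln a) by exact Ha; apply exp_le_compat; rewrite S_INR.
  apply (Rmult_lt_compat_r N) in Hn; [| exact HN].
  replace (- ln a / N * N) with (- ln a) in Hn by (field; lra); lra.
Qed.

Definition hardy_weight (c g N : R) (k : nat) : R :=
  Rpower (geom N k) c * Rpower (1 + N * INR (S k)) g.

Lemma hardy_weight_ge0 c g N k : 0 <= hardy_weight c g N k.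
Proof. apply Rmult_le_pos; left; apply Rpower_pos. Qed.

Lemma hardy_weight_halves c g N k : 0 <= N -> 0 <= g -> (g + 1) * ln 2 <= c * N ->
  2 * hardy_weight c g N (S k) <= hardy_weight c g N k.
Proof.
  intros HN Hg Hlarge; unfold hardy_weight, geom, Rpower; rewrite !ln_exp.
  rewrite <- (exp_ln 2) at 1 by lra; rewrite <- !exp_plus; apply exp_le_compat.
  assert (Hk := pos_INR k); rewrite !S_INR.
  assert (ln (1 + N * (INR k + 1 + 1)) <= ln 2 + ln (1 + N * (INR k + 1))).
  { rewrite <- ln_mult by nra; apply ln_le; nra. }
  nra.
Qed.

Lemma log_weight_shift N g beta k : 0 <= N -> 0 <= g -> 0 <= beta ->
  Rpower (1 + N * INR (S k)) g * Rpower (1 + N * INR k) (- beta)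
  <= Rpower (1 + 2 * N) beta * Rpower (1 + N * INR (S (S k))) (g - beta).
Proof.
  intros HN Hg Hb; unfold Rpower; rewrite <- !exp_plus; apply exp_le_compat.
  assert (Hk := pos_INR k); rewrite !S_INR.
  assert (ln (1 + N * (INR k + 1)) <= ln (1 + N * (INR k + 1 + 1))) by (apply ln_le; nra).
  assert (ln (1 + N * (INR k + 1 + 1)) <= ln (1 + 2 * N) + ln (1 + N * INR k)).
  { rewrite <- ln_mult by nra; apply ln_le; nra. }
  nra.
Qed.

(** * The two inequalities *)

Lemma Rsup_lub (E : R -> Prop) : bound E -> (exists x, E x) -> is_lub E (Rsup E).
Proof.
  intros Hb He; unfold Rsup; apply epsilon_spec.
  destruct (completeness E Hb He) as [m Hm]; exists m; exact Hm.
Qed.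

Section Equivalence.

Variables q alpha theta r : R.
Hypotheses (Hq : 1 < q) (Halpha : 0 < alpha) (Htheta : 0 < theta < 1) (Hr : 1 <= r).
Variable K : R -> R.
Hypothesis HK0 : forall t, 0 < t < 1 -> 0 <= K t.
Hypothesis HKdec : forall s t, 0 < s -> s <= t -> t < 1 -> K t <= K s.

Let Hweight_exp : 0 <= alpha / q.
Proof. apply Rlt_le, Rdiv_lt_0_compat; lra. Qed.

Let Hpower_exp : 0 < (1 - theta) * r.
Proof. nra. Qed.

Let Hlog_exp : 0 <= alpha * (1 - theta) / q * r.
Proof. apply Rmult_le_pos; [apply Rlt_le, Rdiv_lt_0_compat |]; nra. Qed.

Lemma weight_bounds s : 0 < s < 1 -> 0 < rpow (1 - ln s) (- (alpha / q)) <= 1.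
Proof.
  intros Hs; assert (1 < 1 - ln s) by (apply one_lt_1_minus_ln; auto).
  rewrite rpow_pos_eq by lra; split; [apply Rpower_pos |].
  apply Rle_trans with (Rpower 1 (- (alpha / q))); [apply Rpower_le_base_nonpos; lra |].
  unfold Rpower; rewrite ln_1, Rmult_0_r, exp_0; lra.
Qed.

Lemma Ksup_is_lub t : 0 < t < 1 ->
  is_lub (fun y => exists s, t < s < 1 /\ y = rpow (1 - ln s) (- (alpha / q)) * K s)
         (Ksup q alpha K t).
Proof.
  intros Ht; apply Rsup_lub.
  - exists (K t); intros y [s [Hs ->]].
    destruct (weight_bounds s); [lra |].
    assert (K s <= K t) by (apply HKdec; lra); assert (0 <= K s) by (apply HK0; lra); nra.
  - exists (rpow (1 - ln ((t + 1) / 2)) (- (alpha / q)) * K ((t + 1) / 2)), ((t + 1) / 2).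
    split; [lra | reflexivity].
Qed.

Lemma Ksup_ge t s : 0 < t -> t < s < 1 ->
  rpow (1 - ln s) (- (alpha / q)) * K s <= Ksup q alpha K t.
Proof. intros Ht Hs; apply (Ksup_is_lub t); [lra | exists s; auto]. Qed.

Lemma Ksup_le t B : 0 < t < 1 ->
  (forall s, t < s < 1 -> rpow (1 - ln s) (- (alpha / q)) * K s <= B) ->
  Ksup q alpha K t <= B.
Proof. intros Ht HB; apply (Ksup_is_lub t Ht); intros y [s [Hs ->]]; auto. Qed.

Lemma Ksup_ge0 t : 0 < t < 1 -> 0 <= Ksup q alpha K t.
Proof.
  intros Ht; set (s := (t + 1) / 2).
  destruct (weight_bounds s); [unfold s; lra |].
  assert (0 <= K s) by (apply HK0; unfold s; lra).
  apply Rle_trans with (rpow (1 - ln s) (- (alpha / q)) * K s);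
    [nra | apply Ksup_ge; unfold s; lra].
Qed.

Lemma Ksup_decreasing a b : 0 < a -> b < 1 -> decreasing_nonneg_on a b (Ksup q alpha K).
Proof.
  intros Ha Hb s t Hs Hst Ht; split; [apply Ksup_ge0; lra |].
  apply Ksup_le; [lra |]; intros u Hu; apply Ksup_ge; lra.
Qed.

Lemma lhs_integrand_eq t : 0 < t < 1 ->
  lhs_integrand q alpha theta r K t
  = Rpower t ((1 - theta) * r) * Rpower (1 - ln t) (alpha * (1 - theta) / q * r)
    * (rpow (Ksup q alpha K t) r / t).
Proof.
  intros Ht; apply rpow_weighted_eq; [lra | | apply Ksup_ge0; auto].
  assert (1 < 1 - ln t) by (apply one_lt_1_minus_ln; auto); lra.
Qed.

Lemma rhs_integrand_eq t : 0 < t < 1 ->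
  rhs_integrand q alpha theta r K t
  = Rpower t ((1 - theta) * r) * Rpower (1 - ln t) (- (alpha * theta / q) * r)
    * (rpow (K t) r / t).
Proof.
  intros Ht; apply rpow_weighted_eq; [lra | | apply HK0; auto].
  assert (1 < 1 - ln t) by (apply one_lt_1_minus_ln; auto); lra.
Qed.

Lemma lhs_integrable a b : 0 < a -> a <= b -> b < 1 ->
  Riemann_integrable (lhs_integrand q alpha theta r K) a b.
Proof.
  intros Ha Hab Hb.
  eapply Riemann_integrable_ext;
    [intros t Ht; rewrite Rmin_left, Rmax_right in Ht by lra; symmetry; apply lhs_integrand_eq; lra |].
  apply Riemann_integrable_monotone_prod;
    auto using Rpower_monotone_on, Rpower_1_minus_ln_monotone_on.
  apply decreasing_nonneg_on_mult; auto using decreasing_nonneg_on_inv.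
  apply decreasing_nonneg_on_rpow; [lra | apply Ksup_decreasing; auto].
Qed.

Lemma rhs_integrable a b : 0 < a -> a <= b -> b < 1 ->
  Riemann_integrable (rhs_integrand q alpha theta r K) a b.
Proof.
  intros Ha Hab Hb.
  eapply Riemann_integrable_ext;
    [intros t Ht; rewrite Rmin_left, Rmax_right in Ht by lra; symmetry; apply rhs_integrand_eq; lra |].
  apply Riemann_integrable_monotone_prod;
    auto using Rpower_monotone_on, Rpower_1_minus_ln_monotone_on.
  apply decreasing_nonneg_on_mult; auto using decreasing_nonneg_on_inv.
  apply decreasing_nonneg_on_rpow; [lra |].
  intros s t Hs Hst Ht; split; [apply HK0 | apply HKdec]; lra.
Qed.

Lemma rhs_le_lhs_half t : 0 < t < 1 ->
  rhs_integrand q alpha theta r K t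
  <= Rpower 2 ((1 - theta) * r) * (/ 2 * lhs_integrand q alpha theta r K (/ 2 * t)).
Proof.
  intros Ht; rewrite rhs_integrand_eq, lhs_integrand_eq by lra.
  set (c := (1 - theta) * r); set (g := alpha * (1 - theta) / q * r).
  assert (HP := one_lt_1_minus_ln t Ht).
  assert (HPu : 1 - ln t <= 1 - ln (/ 2 * t)) by (apply one_minus_ln_le; lra).
  assert (HK : Rpower (1 - ln t) (- (alpha / q) * r) * rpow (K t) r
               <= rpow (Ksup q alpha K (/ 2 * t)) r).
  { rewrite <- Rpower_mult, <- rpow_mult by (try apply Rpower_pos; apply HK0; auto).
    rewrite <- (rpow_pos_eq (1 - ln t)) by lra.
    destruct (weight_bounds t Ht); assert (0 <= K t) by (apply HK0; auto).
    apply rpow_le_base; [nra | apply Ksup_ge; lra | lra]. }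
  assert (Hlog : Rpower (1 - ln t) g <= Rpower (1 - ln (/ 2 * t)) g)
    by (apply Rle_Rpower_l; [unfold g | ]; lra).
  assert (Hsplit : Rpower (1 - ln t) (- (alpha * theta / q) * r)
                   = Rpower (1 - ln t) g * Rpower (1 - ln t) (- (alpha / q) * r)).
  { rewrite <- Rpower_plus; f_equal; unfold g; field; lra. }
  assert (Hscale : Rpower 2 c * (/ 2 * Rpower (/ 2 * t) c * / (/ 2 * t)) = Rpower t c * / t).
  { rewrite <- Rpower_mult_distr by lra; unfold Rpower; rewrite ln_Rinv, Ropp_mult_distr_r_reverse,
      exp_Ropp by lra; field; split; [lra | apply exp_neq_0]. }
  rewrite Hsplit; unfold Rdiv; fold (alpha / q).
  replace (Rpower 2 c * (/ 2 * (Rpower (/ 2 * t) c * Rpower (1 - ln (/ 2 * t)) g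
             * (rpow (Ksup q alpha K (/ 2 * t)) r * / (/ 2 * t)))))
    with (Rpower 2 c * (/ 2 * Rpower (/ 2 * t) c * / (/ 2 * t))
          * Rpower (1 - ln (/ 2 * t)) g * rpow (Ksup q alpha K (/ 2 * t)) r) by ring.
  rewrite Hscale.
  assert (0 < Rpower t c * / t) by (apply Rmult_lt_0_compat; [apply Rpower_pos | apply Rinv_0_lt_compat; lra]).
  assert (0 <= Rpower (1 - ln t) (- (alpha / q) * r) * rpow (K t) r)
    by (apply Rmult_le_pos; [left; apply Rpower_pos | apply rpow_ge0]).
  pose proof (Rpower_pos (1 - ln t) g).
  replace (Rpower t c * (Rpower (1 - ln t) g * Rpower (1 - ln t) (- (alpha / q) * r)) * (rpow (K t) r * / t))
    with (Rpower t c * / t * Rpower (1 - ln t) g * (Rpower (1 - ln t) (- (alpha / q) * r) * rpow (K t) r))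
    by ring.
  apply Rmult_le_compat; [apply Rmult_le_pos | | apply Rmult_le_compat_l |]; lra.
Qed.

Lemma int01_rhs_le_lhs M :
  int01_le (lhs_integrand q alpha theta r K) M ->
  int01_le (rhs_integrand q alpha theta r K) (Rpower 2 ((1 - theta) * r) * M).
Proof.
  intros HL a b pr Ha Hab Hb.
  assert (prL := lhs_integrable (/ 2 * a) (/ 2 * b) ltac:(lra) ltac:(lra) ltac:(lra)).
  apply Rle_trans with (Rpower 2 ((1 - theta) * r) * RiemannInt prL).
  - apply RiemannInt_le_dilation; auto; intros t Ht; apply rhs_le_lhs_half; lra.
  - apply Rmult_le_compat_l; [left; apply Rpower_pos | apply HL; lra].
Qed.

Section Discretization.

Variable N : R.
Hypothesis HN : 0 < N.

Definition cell_value (k : nat) : R :=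
  Rpower (1 + N * INR k) (- (alpha / q)) * K (geom N (S k)).

Lemma cell_value_ge0 k : 0 <= cell_value k.
Proof.
  apply Rmult_le_pos; [left; apply Rpower_pos | apply HK0].
  split; [apply geom_pos | apply (geom_S_lt_1 N _ HN)].
Qed.

Lemma Ksup_le_max_upto k t : 0 < t < 1 -> geom N (S k) <= t ->
  Ksup q alpha K t <= max_upto cell_value k.
Proof.
  intros Ht Hk; apply Ksup_le; auto; intros s Hs.
  destruct (locate_in_cells (geom N) k s) as [j [Hj [Hjs Hsj]]]; [rewrite geom_0; lra |].
  apply Rle_trans with (cell_value j); [| apply max_upto_ge; auto].
  assert (Hxj := geom_pos N (S j)).
  rewrite rpow_pos_eq by (assert (1 < 1 - ln s) by (apply one_lt_1_minus_ln; lra); lra).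
  apply Rmult_le_compat; [left; apply Rpower_pos | apply HK0; lra | | apply HKdec; lra].
  rewrite <- one_minus_ln_geom; apply Rpower_le_base_nonpos; [| apply one_minus_ln_le; lra | lra].
  rewrite one_minus_ln_geom; pose proof (pos_INR j); nra.
Qed.

Lemma lhs_le_on_cell k t : 0 < t < 1 -> geom N (S k) <= t <= geom N k ->
  lhs_integrand q alpha theta r K t
  <= hardy_weight ((1 - theta) * r) (alpha * (1 - theta) / q * r) N k
     * sum_f_R0 (fun j => rpow (cell_value j) r) k / geom N (S k).
Proof.
  intros Ht Hk; rewrite lhs_integrand_eq by auto; unfold hardy_weight, Rdiv.
  assert (Hx := geom_pos N (S k)).
  assert (Hpow : Rpower t ((1 - theta) * r) <= Rpower (geom N k) ((1 - theta) * r))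
    by (apply Rle_Rpower_l; lra).
  assert (Hlog : Rpower (1 - ln t) (alpha * (1 - theta) / q * r)
                 <= Rpower (1 + N * INR (S k)) (alpha * (1 - theta) / q * r)).
  { rewrite <- one_minus_ln_geom; apply Rle_Rpower_l; [lra | split; [| apply one_minus_ln_le; lra]].
    pose proof (one_lt_1_minus_ln t Ht); lra. }
  assert (Hsup : rpow (Ksup q alpha K t) r <= sum_f_R0 (fun j => rpow (cell_value j) r) k).
  { eapply Rle_trans; [| apply rpow_max_upto_le_sum; [lra | apply cell_value_ge0]].
    apply rpow_le_base; [apply Ksup_ge0; auto | apply Ksup_le_max_upto; lra | lra]. }
  assert (Hinv : / t <= / geom N (S k)) by (apply Rinv_le_contravar; lra).
  pose proof (Rpower_pos t ((1 - theta) * r)).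
  pose proof (Rpower_pos (1 - ln t) (alpha * (1 - theta) / q * r)).
  pose proof (rpow_ge0 (Ksup q alpha K t) r).
  assert (0 < / t) by (apply Rinv_0_lt_compat; lra).
  rewrite <- Rmult_assoc.
  apply Rmult_le_compat; [repeat apply Rmult_le_pos; lra | lra | | lra].
  apply Rmult_le_compat; [apply Rmult_le_pos; lra | lra | | lra].
  apply Rmult_le_compat; lra.
Qed.

Lemma RiemannInt_lhs_cell_le k a b (pr : Riemann_integrable (lhs_integrand q alpha theta r K) a b) :
  geom N (S k) <= a -> a <= b -> b <= geom N k ->
  RiemannInt pr
  <= exp N * (hardy_weight ((1 - theta) * r) (alpha * (1 - theta) / q * r) N k
              * sum_f_R0 (fun j => rpow (cell_value j) r) k).
Proof.
  intros Ha Hab Hb.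
  set (B := hardy_weight ((1 - theta) * r) (alpha * (1 - theta) / q * r) N k
            * sum_f_R0 (fun j => rpow (cell_value j) r) k).
  assert (HB : 0 <= B)
    by (apply Rmult_le_pos; [apply hardy_weight_ge0 | apply cond_pos_sum; intros; apply rpow_ge0]).
  assert (Hx := geom_pos N (S k)); assert (Hk1 := geom_le_1 N k (Rlt_le _ _ HN)).
  assert (Hpt : forall t, a < t < b -> 0 <= lhs_integrand q alpha theta r K t <= B / geom N (S k)).
  { intros t Ht; split; [| apply lhs_le_on_cell; lra].
    rewrite lhs_integrand_eq by lra; repeat apply Rmult_le_pos;
      try (left; apply Rpower_pos); [apply rpow_ge0 | left; apply Rinv_0_lt_compat; lra]. }
  apply Rle_trans with (B / geom N (S k) * (b - a)); [apply (RiemannInt_const_bound pr Hab Hpt) |].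
  assert (Hcell : geom N k / geom N (S k) = exp N).
  { rewrite geom_S, exp_Ropp; field; split; [apply exp_neq_0 | apply Rgt_not_eq, geom_pos]. }
  rewrite <- Hcell; unfold Rdiv.
  assert (0 <= B * / geom N (S k)) by (apply Rmult_le_pos; [| left; apply Rinv_0_lt_compat]; lra).
  assert (b - a <= geom N k) by lra; nra.
Qed.

Definition rhs_cell_constant : R :=
  Rpower (1 + 2 * N) (alpha / q * r) * exp (2 * ((1 - theta) * r) * N) / (1 - exp (- N)).

Lemma rhs_ge_on_cell k t : geom N (S (S k)) <= t <= geom N (S k) ->
  Rpower (geom N (S (S k))) ((1 - theta) * r)
  * Rpower (1 + N * INR (S (S k))) (- (alpha * theta / q) * r)
  * (rpow (K (geom N (S k))) r / geom N (S k))
  <= rhs_integrand q alpha theta r K t.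
Proof.
  intros Ht; assert (Hx := geom_pos N (S (S k))); assert (Hx1 := geom_S_lt_1 N k HN).
  rewrite rhs_integrand_eq by lra.
  assert (HKt : 0 <= K (geom N (S k))) by (apply HK0; lra).
  assert (Hpow : Rpower (geom N (S (S k))) ((1 - theta) * r) <= Rpower t ((1 - theta) * r))
    by (apply Rle_Rpower_l; lra).
  assert (Hlog : Rpower (1 + N * INR (S (S k))) (- (alpha * theta / q) * r)
                 <= Rpower (1 - ln t) (- (alpha * theta / q) * r)).
  { rewrite <- one_minus_ln_geom; apply Rpower_le_base_nonpos.
    - pose proof (one_lt_1_minus_ln t ltac:(lra)); lra.
    - apply one_minus_ln_le; lra.
    - assert (0 <= alpha * theta / q) by (apply Rlt_le, Rdiv_lt_0_compat; nra); nra. }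
  assert (HKr : rpow (K (geom N (S k))) r / geom N (S k) <= rpow (K t) r / t).
  { unfold Rdiv; apply Rmult_le_compat; [apply rpow_ge0 | left; apply Rinv_0_lt_compat; lra | |].
    - apply rpow_le_base; [auto | apply HKdec | ]; lra.
    - apply Rinv_le_contravar; lra. }
  pose proof (Rpower_pos (geom N (S (S k))) ((1 - theta) * r)).
  pose proof (Rpower_pos (1 + N * INR (S (S k))) (- (alpha * theta / q) * r)).
  assert (0 <= rpow (K (geom N (S k))) r / geom N (S k))
    by (apply Rmult_le_pos; [apply rpow_ge0 | left; apply Rinv_0_lt_compat; lra]).
  apply Rmult_le_compat; [nra | auto | apply Rmult_le_compat |]; lra.
Qed.

Lemma rhs_cell_constant_pos : 0 < rhs_cell_constant.
Proof.
  pose proof (exp_opp_lt_1 N HN); apply Rdiv_lt_0_compat; [| lra].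
  apply Rmult_lt_0_compat; [apply Rpower_pos | apply exp_pos].
Qed.

Lemma hardy_term_le_RiemannInt_rhs k
  (pr : Riemann_integrable (rhs_integrand q alpha theta r K) (geom N (S (S k))) (geom N (S k))) :
  hardy_weight ((1 - theta) * r) (alpha * (1 - theta) / q * r) N k * rpow (cell_value k) r
  <= rhs_cell_constant * RiemannInt pr.
Proof.
  assert (HX2c : Rpower (geom N (S (S k))) ((1 - theta) * r)
                 = Rpower (geom N k) ((1 - theta) * r) * exp (- (2 * ((1 - theta) * r) * N))).
  { unfold geom; rewrite !Rpower_exp, <- exp_plus, !S_INR; f_equal; ring. }
  set (c := (1 - theta) * r) in *; set (g := alpha * (1 - theta) / q * r); set (beta := alpha / q * r).
  set (X1 := geom N (S k)) in *; set (X2 := geom N (S (S k))) in *; set (Kr := rpow (K X1) r).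
  set (P2 := Rpower (1 + N * INR (S (S k))) (- (alpha * theta / q) * r)).
  assert (HX1 := geom_pos N (S k)); assert (HX2 := geom_pos N (S (S k))).
  assert (HX12 : X2 = X1 * exp (- N)) by apply geom_S.
  assert (He := exp_opp_lt_1 N HN); assert (He0 := exp_pos (- N)).
  assert (HKr : 0 <= Kr) by apply rpow_ge0.
  assert (Hint : Rpower X2 c * P2 * (Kr / X1) * (X1 - X2) <= RiemannInt pr).
  { apply RiemannInt_ge_const; [apply (geom_decreasing N (Rlt_le _ _ HN)) |].
    intros t Ht; apply rhs_ge_on_cell; change (X2 <= t <= X1); lra. }
  assert (Hterm : hardy_weight c g N k * rpow (cell_value k) r
                  = Rpower (geom N k) c * Kr
                    * (Rpower (1 + N * INR (S k)) g * Rpower (1 + N * INR k) (- beta))).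
  { unfold hardy_weight, cell_value, beta.
    rewrite rpow_mult, Rpower_mult
      by (first [apply Rpower_pos | apply HK0; split; [apply geom_pos | apply (geom_S_lt_1 N _ HN)]]).
    replace (- (alpha / q) * r) with (- (alpha / q * r)) by ring; fold X1 Kr; ring. }
  assert (Hshift := log_weight_shift N g beta k (Rlt_le _ _ HN) Hlog_exp
                      ltac:(unfold beta; apply Rmult_le_pos; lra)).
  replace (g - beta) with (- (alpha * theta / q) * r) in Hshift by (unfold g, beta; field; lra).
  fold P2 in Hshift.
  apply Rle_trans with (rhs_cell_constant * (Rpower X2 c * P2 * (Kr / X1) * (X1 - X2)));
    [| apply Rmult_le_compat_l; [left; apply rhs_cell_constant_pos | exact Hint]].
  rewrite Hterm, HX2c; unfold rhs_cell_constant; fold c beta.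
  replace (Rpower (1 + 2 * N) beta * exp (2 * c * N) / (1 - exp (- N))
           * (Rpower (geom N k) c * exp (- (2 * c * N)) * P2 * (Kr / X1) * (X1 - X2)))
    with (Rpower (geom N k) c * Kr * (Rpower (1 + 2 * N) beta * P2)).
  - apply Rmult_le_compat_l; [apply Rmult_le_pos; [left; apply Rpower_pos | auto] | exact Hshift].
  - rewrite HX12, (exp_Ropp (2 * c * N)); field; repeat split; try lra; apply exp_neq_0.
Qed.

Hypothesis HN_large : (alpha * (1 - theta) / q * r + 1) * ln 2 <= (1 - theta) * r * N.

Lemma int01_lhs_le_rhs M :
  int01_le (rhs_integrand q alpha theta r K) M ->
  int01_le (lhs_integrand q alpha theta r K) (exp N * (2 * rhs_cell_constant) * M).
Proof.
  intros HR a b pr Ha Hab Hb.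
  destruct (geom_exhausts N a HN Ha) as [n Hn].
  set (D := hardy_weight ((1 - theta) * r) (alpha * (1 - theta) / q * r) N).
  set (A := fun j => rpow (cell_value j) r).
  assert (HD : forall k, 0 <= D k) by (intros; apply hardy_weight_ge0).
  assert (HA : forall k, 0 <= A k) by (intros; apply rpow_ge0).
  assert (Hdec := geom_decreasing N (Rlt_le _ _ HN)).
  assert (Hlhs : RiemannInt pr <= sum_f_R0 (fun k => exp N * (D k * sum_f_R0 A k)) n).
  { apply (RiemannInt_le_sum_cells _ (geom N)); auto; [| | rewrite geom_0; lra].
    - intros k; apply Rmult_le_pos; [left; apply exp_pos |].
      apply Rmult_le_pos; auto; apply cond_pos_sum; auto.
    - intros k a' b' pr'; apply RiemannInt_lhs_cell_le. }
  rewrite (sum_eq _ (fun k => D k * sum_f_R0 A k * exp N)), <- scal_sum in Hlhs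
    by (intros; ring).
  assert (Hhardy := sum_partial_sums_le D A n HD HA
                      (fun k => hardy_weight_halves ((1 - theta) * r) (alpha * (1 - theta) / q * r)
                                  N k (Rlt_le _ _ HN) Hlog_exp HN_large)).
  assert (Hx2 := geom_pos N (S (S n))).
  assert (Hx21 : geom N (S (S n)) <= geom N 1) by (apply decreasing_prop; auto; lia).
  assert (prR := rhs_integrable _ _ Hx2 Hx21 (geom_S_lt_1 N 0 HN)).
  assert (Hrhs : sum_f_R0 (fun k => D k * A k) n <= rhs_cell_constant * RiemannInt prR).
  { apply (sum_cells_le_RiemannInt _ (fun k => geom N (S k))); [intros k; apply Hdec |].
    intros k pr'; apply hardy_term_le_RiemannInt_rhs. }
  assert (HM : RiemannInt prR <= M) by (apply HR; auto; apply (geom_S_lt_1 N _ HN)).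
  assert (HC := rhs_cell_constant_pos); pose proof (exp_pos N).
  apply Rle_trans with (1 := Hlhs).
  rewrite Rmult_assoc; apply Rmult_le_compat_l; [lra |].
  apply Rle_trans with (1 := Hhardy); rewrite Rmult_assoc; apply Rmult_le_compat_l; [lra |].
  apply Rle_trans with (1 := Hrhs); apply Rmult_le_compat_l; lra.
Qed.

End Discretization.

End Equivalence.

Lemma int01_le_ge0 f M : int01_le f M -> 0 <= M.
Proof.
  intros H; pose proof (H (/ 2) (/ 2) (RiemannInt_P7 f (/ 2)) ltac:(lra) ltac:(lra) ltac:(lra)) as H0.
  rewrite RiemannInt_P9 in H0; exact H0.
Qed.

Lemma int01_le_weaken f M M' : int01_le f M -> M <= M' -> int01_le f M'.
Proof. intros H HM a b pr Ha Hab Hb; apply Rle_trans with M; auto. Qed.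

Theorem proposition3p1 (q alpha theta r : R) :
  1 < q -> 0 < alpha -> 0 < theta < 1 -> 1 <= r ->
  exists c : R, 0 < c /\
    forall K : R -> R,
      (forall t, 0 < t < 1 -> 0 <= K t) ->
      (forall s t, 0 < s -> s <= t -> t < 1 -> K t <= K s) ->
      forall M : R,
        (int01_le (rhs_integrand q alpha theta r K) M ->
         int01_le (lhs_integrand q alpha theta r K) (c * M)) /\
        (int01_le (lhs_integrand q alpha theta r K) M ->
         int01_le (rhs_integrand q alpha theta r K) (c * M)).
Proof.
  intros Hq Halpha Htheta Hr.
  set (g := alpha * (1 - theta) / q * r); set (c := (1 - theta) * r).
  assert (Hg : 0 <= g) by (apply Rmult_le_pos; [apply Rlt_le, Rdiv_lt_0_compat |]; nra).
  assert (Hc : 0 < c) by (unfold c; nra).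
  (* the grid step making the Hardy weights halve from one cell to the next *)
  set (N := (g + 1) * ln 2 / c).
  assert (HN : 0 < N) by (pose proof ln_lt_2; apply Rdiv_lt_0_compat; nra).
  assert (HN_large : (g + 1) * ln 2 <= c * N) by (unfold N; right; field; lra).
  set (c1 := exp N * (2 * rhs_cell_constant q alpha theta r N)); set (c2 := Rpower 2 c).
  exists (Rmax c1 c2); split; [apply Rlt_le_trans with c2; [apply Rpower_pos | apply Rmax_r] |].
  intros K HK0 HKdec M; split; intros HM; pose proof (int01_le_ge0 _ _ HM).
  - apply int01_le_weaken with (c1 * M); [| apply Rmult_le_compat_r; auto; apply Rmax_l].
    exact (int01_lhs_le_rhs q alpha theta r Hq Halpha Htheta Hr K HK0 HKdec N HN HN_large M HM).
  - apply int01_le_weaken with (c2 * M); [| apply Rmult_le_compat_r; auto; apply Rmax_r].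
    exact (int01_rhs_le_lhs q alpha theta r Hq Halpha Htheta Hr K HK0 HKdec M HM).
Qed.
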